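(* For any distribution $F$ on $[0,\infty)$, any arrivals $0<\sigma_1<\cdots<\sigma_m$, and any probability vectors $\mathbf p_1=(p_{11},\dots,p_{1m})$, $\mathbf p_2=(p_{21},\dots,p_{2m})\in[0,1]^m$ with $p_{1t}\le p_{2t}$ for every $t\in[m]$, we have $r(F,\boldsymbol\sigma,\mathbf p_1)\le r(F,\boldsymbol\sigma,\mathbf p_2)$.
   Context: Random $(F,\boldsymbol\sigma,\mathbf p)$ process: a single unit of a resource starts at time $0$ available. If the unit is available just prior to $\sigma_t$, then with probability $p_t$ (independently) it becomes in-use for a duration $d$ drawn independently from $F$, i.e. in use on $(\sigma_t,\sigma_t+d)$, available again at $\sigma_t+d$. Each switch from available to in-use earns reward $1$; $r(F,\boldsymbol\sigma,\mathbf p)$ is the expected total reward. *)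

From HB Require Import structures.
From mathcomp Require Import all_boot all_order all_algebra.
From mathcomp Require Import all_classical all_reals all_analysis.
Set Implicit Arguments. Unset Strict Implicit. Unset Printing Implicit Defensive.
Import Order.TTheory GRing.Theory Num.Theory.
Local Open Scope classical_set_scope.
Local Open Scope ring_scope.

(* Expected future reward of the random (F, sigma, p) process.
   [reward_from F sigma p k t a] = expected reward collected from the k arrivals
   sigma t, sigma (t+1), ..., sigma (t+k-1), given that the unit is (or will be)
   available from time a on (i.e. it is free at any arrival time s >= a) and is
   not reserved in between. *)
Fixpoint reward_from (R : realType) (F : probability R R)
    (sigma p : nat -> R) (k t : nat) (a : R) : R :=
  match k with
  | 0 => 0
  | k'.+1 =>
      if a <= sigma t then
        p t * (1 + Rintegral F setT (fun d => reward_from F sigma p k' t.+1 (sigma t + d)))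
        + (1 - p t) * reward_from F sigma p k' t.+1 a
      else reward_from F sigma p k' t.+1 a
  end.

(* r(F, sigma, p) for m arrivals sigma 0 < ... < sigma (m-1) (0-indexed);
   the unit is available at time 0. *)
Definition expected_reward (R : realType) (F : probability R R)
    (sigma p : nat -> R) (m : nat) : R :=
  reward_from F sigma p m 0 0.

From HB Require Import structures.
From mathcomp Require Import all_boot all_order all_algebra.
From mathcomp Require Import all_classical all_reals all_analysis.
From mathcomp Require Import lra zify measurable_realfun.
Import Order.TTheory GRing.Theory Num.Theory.
Set Implicit Arguments. Unset Strict Implicit. Unset Printing Implicit Defensive.
Local Open Scope classical_set_scope.
Local Open Scope ring_scope.

(* Write W_{k,t}(a) = reward_from F sigma p k t a for the value of the last k
   arrivals from index t when the unit is free from time a on.  One arrival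
   acts on a value function W through the "arrival step"
     a <= sigma_t :  p_t (1 + E[W(sigma_t + d)]) + (1 - p_t) W(a),
   which is increasing in p_t exactly when W(a) <= 1 + E[W(sigma_t + d)]:
   accepting now is worth at least declining.  We show by induction on k that
   every W_{k,t} is "admissible": nonincreasing in a, valued in [0, k], and
   satisfying the one-step bound W(x) <= 1 + E[W(x + d)].  Since W_{k,t+1}
   is constant before the arrival sigma_{t+1} > sigma_t, the one-step bound
   at sigma_t gives the required inequality for every a <= sigma_t.  The
   theorem then follows by a second induction comparing W for p1 and p2. *)

(* Product form of an inequality, as a hint for linear arithmetic. *)
Lemma mulr_ge0_subr (R : numDomainType) (x y z : R) :
  0 <= x -> y <= z -> 0 <= x * (z - y).
Proof. by move=> x0 yz; rewrite mulr_ge0 // subr_ge0. Qed.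

Section ArrivalStep.
Variables (R : realType) (F : probability R R).

Definition mean_after (g : R -> R) (x : R) : R :=
  Rintegral F setT (fun d => g (x + d)).

Definition bounded_nonincreasing (g : R -> R) (M : R) : Prop :=
  (forall x y, x <= y -> g y <= g x) /\ (forall x, 0 <= g x <= M).

Definition admissible (g : R -> R) (M : R) : Prop :=
  bounded_nonincreasing g M /\ (forall x, g x <= 1 + mean_after g x).

Definition arrival_step (W : R -> R) (s q : R) : R -> R :=
  fun z => if z <= s then q * (1 + mean_after W s) + (1 - q) * W z else W z.

Lemma Rintegral_prob_cst (c : R) : Rintegral F setT (fun=> c) = c.
Proof.
have /(congr1 fine) F1 := probability_setT F.
by rewrite Rintegral_cst //= F1 mulr1.
Qed.

Lemma bounded_nonincreasing_shift (g : R -> R) (M c : R) :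
  bounded_nonincreasing g M -> bounded_nonincreasing (fun d => g (c + d)) M.
Proof.
by case=> gni gb; split=> [x y xy|x]; [apply: gni; rewrite lerD2l | exact: gb].
Qed.

(* Monotone functions are Borel and bounded ones are integrable for the
   probability F: all integrals below are genuine Lebesgue integrals. *)
Lemma bounded_nonincreasing_integrable (g : R -> R) (M : R) :
  bounded_nonincreasing g M -> F.-integrable setT (EFin \o g).
Proof.
move=> [gni gb]; apply: measurable_bounded_integrable => //.
- by rewrite (le_lt_trans (probability_le1 F measurableT)) ?ltry.
- by apply: nonincreasing_measurable => // x y _ _; exact: gni.
- rewrite /bounded_near; near=> M0 => x _ /=.
  have /andP[g0 gM] := gb x.
  by rewrite ger0_norm // (le_trans gM).
Unshelve. all: by end_near.
Qed.

Lemma mean_after_bounds (g : R -> R) (M c : R) :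
  bounded_nonincreasing g M -> 0 <= mean_after g c <= M.
Proof.
move=> hg; have [_ gb] := hg.
have M0 : 0 <= M by have /andP[g0 gM] := gb 0; exact: le_trans g0 gM.
apply/andP; split; first by apply: Rintegral_ge0 => x _; case/andP: (gb (c + x)).
rewrite -[leRHS](Rintegral_prob_cst M); apply: le_Rintegral => //.
- exact: bounded_nonincreasing_integrable (bounded_nonincreasing_shift c hg).
- by apply: (@bounded_nonincreasing_integrable _ M); split=> // x; rewrite lexx M0.
- by move=> x _; case/andP: (gb (c + x)).
Qed.

Lemma le_mean_after (g1 g2 : R -> R) (M1 M2 c1 c2 : R) :
  bounded_nonincreasing g1 M1 -> bounded_nonincreasing g2 M2 ->
  (forall d, g1 (c1 + d) <= g2 (c2 + d)) -> mean_after g1 c1 <= mean_after g2 c2.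
Proof.
move=> h1 h2 le12; apply: le_Rintegral => //.
- exact: bounded_nonincreasing_integrable (bounded_nonincreasing_shift c1 h1).
- exact: bounded_nonincreasing_integrable (bounded_nonincreasing_shift c2 h2).
Qed.

Section OneArrival.
Variables (W : R -> R) (s q M : R).
Hypothesis hW : admissible W M.
Hypothesis hq : 0 <= q <= 1.
Hypothesis accept_better : forall z, z <= s -> W z <= 1 + mean_after W s.

Let V := arrival_step W s q.

Lemma arrival_step_ge (z : R) : W z <= V z.
Proof.
rewrite /V /arrival_step; case: ifP => hz //.
have /andP[q0 _] := hq.
by have := mulr_ge0_subr q0 (accept_better hz); lra.
Qed.

Lemma arrival_step_bounded_nonincreasing : bounded_nonincreasing V (M + 1).
Proof.
have [[Wni Wb] _] := hW; have /andP[q0 q1] := hq.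
have q'0 : 0 <= 1 - q by rewrite subr_ge0.
have /andP[A0 AM] := mean_after_bounds s hW.1.
split=> [x y xy|x].
- rewrite /V /arrival_step; have Wxy := Wni _ _ xy.
  have [ys|sy] := lerP y s; first by rewrite (le_trans xy ys) lerD2l ler_wpM2l.
  have [xs|_] := lerP x s; last exact: Wxy.
  have WyA : W y <= 1 + mean_after W s.
    by apply: le_trans (accept_better (lexx s)); apply: Wni; exact: ltW.
  have := mulr_ge0_subr q0 WyA; have := mulr_ge0_subr q'0 Wxy; lra.
- rewrite /V /arrival_step; have /andP[W0 WM] := Wb x.
  case: ifP => _; apply/andP; split; [| |lra|lra].
  + have := mulr_ge0 q0 A0; have := mulr_ge0 q'0 W0; lra.
  + have := mulr_ge0_subr q0 AM; have := mulr_ge0_subr q'0 WM; lra.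
Qed.

Lemma arrival_step_admissible : admissible V (M + 1).
Proof.
have hV := arrival_step_bounded_nonincreasing.
have [[Wni Wb] Wone] := hW; have /andP[q0 q1] := hq.
have q'0 : 0 <= 1 - q by rewrite subr_ge0.
split=> // x; have [xs|sx] := lerP x s.
- have AV : mean_after W s <= mean_after V x.
    apply: (le_mean_after hW.1 hV) => d.
    by apply: le_trans (arrival_step_ge _); apply: Wni; rewrite lerD2r.
  rewrite {1}/V /arrival_step xs.
  have := mulr_ge0_subr q'0 (accept_better xs); lra.
- rewrite /V /arrival_step [x <= s]leNgt sx /=.
  apply: le_trans (Wone x) _; rewrite lerD2l.
  by apply: (le_mean_after hW.1 hV) => d; exact: arrival_step_ge.
Qed.

End OneArrival.

Lemma arrival_step_monotone (W1 W2 : R -> R) (s q1 q2 M1 M2 z : R) :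
  bounded_nonincreasing W1 M1 -> bounded_nonincreasing W2 M2 ->
  (forall x, W1 x <= W2 x) -> 0 <= q1 -> q1 <= q2 -> q2 <= 1 ->
  (forall x, x <= s -> W2 x <= 1 + mean_after W2 s) ->
  arrival_step W1 s q1 z <= arrival_step W2 s q2 z.
Proof.
move=> h1 h2 W12 q10 q12 q21 accept2; rewrite /arrival_step.
case: ifP => zs //.
have A12 : mean_after W1 s <= mean_after W2 s by apply: le_mean_after h1 h2 _.
have q'0 : 0 <= 1 - q1 by rewrite subr_ge0 (le_trans q12).
have dq0 : 0 <= q2 - q1 by rewrite subr_ge0.
have := mulr_ge0_subr q10 A12; have := mulr_ge0_subr q'0 (W12 z).
have := mulr_ge0_subr dq0 (accept2 z zs); lra.
Qed.

End ArrivalStep.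

Section RewardProcess.
Variables (R : realType) (F : probability R R) (sigma : nat -> R) (n : nat).
Hypothesis hsig : forall t, (t.+1 < n)%N -> sigma t < sigma t.+1.

Lemma reward_fromS (p : nat -> R) (k t : nat) :
  reward_from F sigma p k.+1 t =
  arrival_step F (reward_from F sigma p k t.+1) (sigma t) (p t).
Proof. by []. Qed.

Lemma reward_from_flat (p : nat -> R) (k t : nat) (z : R) :
  (t + k.+1 <= n)%N -> z <= sigma t ->
  reward_from F sigma p k t.+1 z = reward_from F sigma p k t.+1 (sigma t).
Proof.
elim: k t z => [//|k IH] t z htk zs.
have st : sigma t < sigma t.+1 by apply: hsig; lia.
rewrite reward_fromS /arrival_step (le_trans zs (ltW st)) (ltW st).
have htk' : (t.+1 + k.+1 <= n)%N by lia.
by rewrite (IH _ _ htk' (le_trans zs (ltW st))) (IH _ _ htk' (ltW st)).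
Qed.

(* Combining flatness with the one-step bound at sigma_t: accepting arrival t
   is at least as good as declining it. *)
Lemma reward_from_accept_better (p : nat -> R) (k t : nat) (M : R) :
  (t + k.+1 <= n)%N -> admissible F (reward_from F sigma p k t.+1) M ->
  forall z, z <= sigma t ->
  reward_from F sigma p k t.+1 z <=
    1 + mean_after F (reward_from F sigma p k t.+1) (sigma t).
Proof.
by move=> htk [_ one_step] z zs; rewrite reward_from_flat.
Qed.

Lemma reward_from_admissible (p : nat -> R) (k t : nat) :
  (forall j, (j < n)%N -> 0 <= p j <= 1) -> (t + k <= n)%N ->
  admissible F (reward_from F sigma p k t) k%:R.
Proof.
move=> hp; elim: k t => [|k IH] t htk.
  split; first by split=> // x; rewrite lexx.
  by move=> x; rewrite /mean_after Rintegral_prob_cst addr0 ler01.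
have hW := IH t.+1 (ltac:(lia) : (t.+1 + k <= n)%N).
rewrite reward_fromS -[k.+1]addn1 natrD.
apply: arrival_step_admissible; first exact: hW.
- by apply: hp; lia.
- exact: reward_from_accept_better htk hW.
Qed.

Lemma reward_from_monotone (p1 p2 : nat -> R) (k t : nat) (a : R) :
  (forall j, (j < n)%N -> 0 <= p1 j <= 1) ->
  (forall j, (j < n)%N -> 0 <= p2 j <= 1) ->
  (forall j, (j < n)%N -> p1 j <= p2 j) -> (t + k <= n)%N ->
  reward_from F sigma p1 k t a <= reward_from F sigma p2 k t a.
Proof.
move=> hp1 hp2 hle; elim: k t a => [//|k IH] t a htk.
have htk' : (t.+1 + k <= n)%N by lia.
have ht : (t < n)%N by lia.
have hW1 := reward_from_admissible hp1 htk'.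
have hW2 := reward_from_admissible hp2 htk'.
have /andP[q10 _] := hp1 t ht; have /andP[_ q21] := hp2 t ht; have q12 := hle t ht.
rewrite !reward_fromS; apply: (arrival_step_monotone _ hW1.1 hW2.1) => //.
- by move=> x; exact: IH.
- exact: reward_from_accept_better htk hW2.
Qed.

End RewardProcess.

Theorem lemma4 (R : realType) (F : probability R R)
    (hF : F `[0%R, +oo[%classic = 1%E)
    (m : nat) (sigma p1 p2 : nat -> R)
    (hsig0 : (0 < m)%N -> 0 < sigma 0%N)
    (hsig : forall t : nat, (t.+1 < m)%N -> sigma t < sigma t.+1)
    (hp1 : forall t : nat, (t < m)%N -> 0 <= p1 t <= 1)
    (hp2 : forall t : nat, (t < m)%N -> 0 <= p2 t <= 1)
    (hle : forall t : nat, (t < m)%N -> p1 t <= p2 t) :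
  expected_reward F sigma p1 m <= expected_reward F sigma p2 m.
Proof. exact: (reward_from_monotone F hsig 0 hp1 hp2 hle (leqnn m : (0 + m <= m)%N)). Qed.
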